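(* Let $G$ be a finite simple graph, $\mathbb{K}$ a field, $R=\mathbb{K}[z:z\in V(G)]$, and $I_3(G)\subseteq R$ its $3$-path ideal. Let $e=\{x,y\}\in E(G)$. Then: (1) $I_3(G):xy=L+J$, where $L=\langle z : z\in N_G(e)\rangle$ and $J=I_3(G\setminus N_G[e])R$. (2) $(I_3(G)+\langle xy\rangle):x=\langle y\rangle+I_2(H)+I_3(G\setminus N_G[x])R$, where $H$ is the graph whose edge set is the union of $N_G^{\mathrm{edge}}(x)$ and the edge set of the complete graph on the vertex set $N_G(x)\setminus\{y\}$.
   Context: A $3$-path in $G$ is a sequence of three distinct vertices $a,b,c$ with $\{a,b\},\{b,c\}\in E(G)$; $I_3(G)=\langle abc : a,b,c \text{ a } 3\text{-path in } G\rangle$. For a subset $S\subseteq V(G)$, $G\setminus S$ denotes the induced subgraph of $G$ on $V(G)\setminus S$, and its $3$-path ideal is regarded inside $R$. $N_G(z)$ is the set of neighbors of $z$, $N_G[z]=N_G(z)\cup\{z\}$. For an edge $e=\{x,y\}$, $N_G(e)=(N_G(x)\setminus\{y\})\cup(N_G(y)\setminus\{x\})$ and $N_G[e]=N_G[x]\cup N_G[y]$. For a vertex $x$, $N_G^{\mathrm{edge}}(x)=\{\{a,b\}\in E(G) : x,a,b \text{ is a } 3\text{-path in } G\}$. For a graph $H$, $I_2(H)$ is its edge ideal, generated by $ab$ for $\{a,b\}\in E(H)$. *)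

From HB Require Import structures.
From mathcomp Require Import all_boot all_order all_algebra.
From mathcomp Require Import mpoly.
Set Implicit Arguments. Unset Strict Implicit. Unset Printing Implicit Defensive.
Import GRing.Theory.
Local Open Scope ring_scope.

(* A finite simple graph on vertex set 'I_n is a symmetric irreflexive
   relation [adj]; the ring is R = K[X_0, ..., X_{n-1}] = {mpoly K[n]},
   the variable X_z corresponding to vertex z. *)

Section Defs.
Variables (K : fieldType) (n : nat).
Notation R := {mpoly K[n]}.

Definition simple_graph (adj : rel 'I_n) : Prop :=
  ssrbool.symmetric adj /\ ssrbool.irreflexive adj.

Definition gen_ideal (S : R -> Prop) : R -> Prop :=
  fun p => exists (m : nat) (c g : 'I_m -> R),
    (forall i, S (g i)) /\ p = \sum_(i < m) c i * g i.

Definition ideal_add (A B : R -> Prop) : R -> Prop :=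
  gen_ideal (fun p => A p \/ B p).

Definition colon (A : R -> Prop) (f : R) : R -> Prop :=
  fun g => A (g * f).

Definition ideal_eq (A B : R -> Prop) : Prop := forall p, A p <-> B p.

Definition path3 (adj : rel 'I_n) (a b c : 'I_n) : bool :=
  [&& a != b, b != c, a != c, adj a b & adj b c].

(* 3-path ideal of the induced subgraph G[W], regarded inside R. *)
Definition I3 (adj : rel 'I_n) (W : {set 'I_n}) : R -> Prop :=
  gen_ideal (fun p => exists a b c, [&& a \in W, b \in W, c \in W & path3 adj a b c]
                                   /\ p = 'X_a * 'X_b * 'X_c).

Definition I2 (hadj : rel 'I_n) : R -> Prop :=
  gen_ideal (fun p => exists a b, hadj a b /\ p = 'X_a * 'X_b).

Definition var_ideal (Z : {set 'I_n}) : R -> Prop :=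
  gen_ideal (fun p => exists z, z \in Z /\ p = 'X_z).

Definition princ (f : R) : R -> Prop := gen_ideal (fun p => p = f).

Definition nbhd (adj : rel 'I_n) (z : 'I_n) : {set 'I_n} := [set w | adj z w].
Definition cnbhd (adj : rel 'I_n) (z : 'I_n) : {set 'I_n} := z |: nbhd adj z.

Definition enbhd (adj : rel 'I_n) (x y : 'I_n) : {set 'I_n} :=
  (nbhd adj x :\ y) :|: (nbhd adj y :\ x).
Definition cenbhd (adj : rel 'I_n) (x y : 'I_n) : {set 'I_n} :=
  cnbhd adj x :|: cnbhd adj y.

(* {a,b} in N^edge_G(x): {a,b} in E(G) and x,a,b is a 3-path
   (as an unordered edge: one of the two orientations is a 3-path from x). *)
Definition edge_nbhd (adj : rel 'I_n) (x : 'I_n) : rel 'I_n :=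
  fun a b => adj a b && (path3 adj x a b || path3 adj x b a).

Definition Hgraph (adj : rel 'I_n) (x y : 'I_n) : rel 'I_n :=
  fun a b => edge_nbhd adj x a b ||
             [&& a != b, a \in nbhd adj x :\ y & b \in nbhd adj x :\ y].

End Defs.

From HB Require Import structures.
From mathcomp Require Import all_boot all_order all_algebra.
From mathcomp Require Import mpoly.
From mathcomp Require Import zify.
Set Implicit Arguments. Unset Strict Implicit. Unset Printing Implicit Defensive.
Import GRing.Theory.
Local Open Scope ring_scope.

(* All ideals involved are monomial ideals, so a colon by a monomial X^m0 can
   be computed on monomials: g lies in the target as soon as every X^u in the
   support of g does, and X^(m0 + u) lies in a monomial ideal only if some
   generator divides it. For (1), a generator x_a x_b x_c dividing
   x y X^u either has a vertex in N(e), whose variable then divides X^u, or,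
   since a 3-path cannot live inside {x, y}, lies in G \ N[e] and divides X^u.
   For (2), the generator x y contributes y, and a 3-path avoiding y loses at
   most x, leaving an edge of H or a 3-path of G \ N[x]. The reverse
   inclusions are checked on generators. *)

Section Ideals.
Variables (K : fieldType) (n : nat).
Local Notation R := {mpoly K[n]}.
Implicit Types (S T A B P : R -> Prop) (f g p : R).

Definition is_ideal P :=
  [/\ P 0, forall a b, P a -> P b -> P (a + b) & forall c a, P a -> P (c * a)].

Lemma gen_ideal_is_ideal S : is_ideal (gen_ideal S).
Proof.
split.
- by exists 0%N, (fun _ => 0), (fun _ => 0); split; [case | rewrite big_ord0].
- move=> _ _ [m1 [c1 [g1 [S1 ->]]]] [m2 [c2 [g2 [S2 ->]]]].
  pose glue (h1 : 'I_m1 -> R) (h2 : 'I_m2 -> R) (i : 'I_(m1 + m2)) :=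
    match split i with inl j => h1 j | inr j => h2 j end.
  exists (m1 + m2)%N, (glue c1 c2), (glue g1 g2); split.
  + by move=> i; rewrite /glue; case: (split i).
  + rewrite big_split_ord /glue; congr (_ + _); apply: eq_bigr => i _.
    * by rewrite -[lshift _ _]/(unsplit (inl i)) unsplitK.
    * by rewrite -[rshift _ _]/(unsplit (inr i)) unsplitK.
- move=> c _ [m [c1 [g [Sg ->]]]]; exists m, (fun i => c * c1 i), g; split=> //.
  by rewrite mulr_sumr; apply: eq_bigr => i _; rewrite mulrA.
Qed.

Lemma gen_ideal_min S P : is_ideal P -> (forall s, S s -> P s) ->
  forall p, gen_ideal S p -> P p.
Proof.
case=> P0 PD PM SP _ [m [c [g [Sg ->]]]].
by apply: (big_ind P) => // i _; apply/PM/SP/Sg.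
Qed.

Lemma gen_ideal_base S s : S s -> gen_ideal S s.
Proof.
by exists 1%N, (fun _ => 1), (fun _ => s); split => //; rewrite big_ord1 mul1r.
Qed.

Lemma gen_ideal_mono S T p :
  (forall s, S s -> T s) -> gen_ideal S p -> gen_ideal T p.
Proof.
by move=> ST; apply: (gen_ideal_min (gen_ideal_is_ideal T)) => s /ST/gen_ideal_base.
Qed.

Lemma ideal_mulr P c a : is_ideal P -> P a -> P (a * c).
Proof. by case=> _ _ PM Pa; rewrite mulrC; apply: PM. Qed.

Lemma colon_is_ideal A f : is_ideal A -> is_ideal (colon A f).
Proof.
case=> A0 AD AM; split; rewrite /colon.
- by rewrite mul0r.
- by move=> a b Aa Ab; rewrite mulrDl; apply: AD.
- by move=> c a Aa; rewrite -mulrA; apply: AM.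
Qed.

Lemma gen_ideal_sub_colon S A f : is_ideal A -> (forall s, S s -> A (s * f)) ->
  forall p, gen_ideal S p -> colon A f p.
Proof. by move=> /(colon_is_ideal f); apply: gen_ideal_min. Qed.

Lemma ideal_add_l A B p : A p -> ideal_add A B p.
Proof. by move=> Ap; apply: gen_ideal_base; left. Qed.

Lemma ideal_add_r A B p : B p -> ideal_add A B p.
Proof. by move=> Bp; apply: gen_ideal_base; right. Qed.

Lemma ideal_add_min A B P : is_ideal P -> (forall p, A p -> P p) ->
  (forall p, B p -> P p) -> forall p, ideal_add A B p -> P p.
Proof. by move=> PI AP BP; apply: (gen_ideal_min PI) => s [/AP | /BP]. Qed.

Lemma ideal_add_gen S T p : ideal_add (gen_ideal S) (gen_ideal T) p ->
  gen_ideal (fun s => S s \/ T s) p.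
Proof.
apply: ideal_add_min; first exact: gen_ideal_is_ideal.
- by move=> q; apply: gen_ideal_mono => s; left.
- by move=> q; apply: gen_ideal_mono => s; right.
Qed.

End Ideals.

Section MonomialIdeals.
Variables (K : fieldType) (n : nat).
Local Notation R := {mpoly K[n]}.
Implicit Types (S P : R -> Prop) (g p : R) (m u w : 'X_{1..n}).

Definition monomial_set S := forall s, S s -> exists m, s = 'X_[m].

Lemma mpolyX_inj : injective (fun m => 'X_[m] : R).
Proof.
move=> m1 m2 /(congr1 (mcoeff m2)); rewrite /= !mcoeffX eqxx.
by case: eqP => // _ /eqP; rewrite eq_sym oner_eq0.
Qed.

Lemma ideal_msupp P g : is_ideal P -> (forall u, u \in msupp g -> P 'X_[u]) -> P g.
Proof.
case=> P0 PD PM Pu; rewrite (mpolyE g) big_seq; apply: (big_ind P) => // u gu.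
by rewrite -mul_mpolyC; apply/PM/Pu.
Qed.

Lemma ideal_lem P w u : is_ideal P -> (w <= u)%MM -> P 'X_[w] -> P 'X_[u].
Proof. by case=> _ _ PM wu Pw; rewrite -(submK wu) mpolyXD; apply: PM. Qed.

Lemma gen_ideal_msupp S p u : monomial_set S -> gen_ideal S p -> u \in msupp p ->
  exists2 m, S 'X_[m] & (m <= u)%MM.
Proof.
move=> monS [k [c [g [Sg ->]]]] /msupp_sum_le /flattenP [_ /mapP [i _ ->]].
have [m gi] := monS _ (Sg i); rewrite gi (perm_mem (msuppMX _ _)).
by case/mapP => m' _ ->; exists m; [rewrite -gi | apply: lem_addr].
Qed.

Lemma colon_monomial_sub S P m0 g : is_ideal P -> monomial_set S ->
  (forall m u, S 'X_[m] -> (m <= m0 + u)%MM -> P 'X_[u]) ->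
  gen_ideal S (g * 'X_[m0]) -> P g.
Proof.
move=> PI monS SP Sg; apply: (ideal_msupp PI) => u gu.
have : (m0 + u)%MM \in msupp (g * 'X_[m0]).
  by rewrite mcoeff_msupp mcoeffMX -mcoeff_msupp.
by case/(gen_ideal_msupp monS Sg) => m; apply: SP.
Qed.

End MonomialIdeals.

Section VertexMonomials.
Variable n : nat.
Implicit Types (a b c z : 'I_n) (u w : 'X_{1..n}).

Lemma lem_cancelU w u z : (w <= U_(z) + u)%MM -> w z = 0%N -> (w <= u)%MM.
Proof.
move=> /mnm_lepP wu wz; apply/mnm_lepP => i; move: (wu i); rewrite mnmDE mnm1E.
by case: eqP => [<-|_]; rewrite ?wz.
Qed.

Definition mpath a b c : 'X_{1..n} := (U_(a) + U_(b) + U_(c))%MM.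

Lemma mpolyX_path (K : fieldType) a b c :
  'X_[mpath a b c] = 'X_a * 'X_b * 'X_c :> {mpoly K[n]}.
Proof. by rewrite !mpolyXD. Qed.

Lemma mpath_eq0 a b c z : z \notin [:: a; b; c] -> mpath a b c z = 0%N.
Proof.
rewrite !inE !(eq_sym z) !mnmDE !mnm1E.
by case/norP=> /negbTE-> /norP [/negbTE-> /negbTE->].
Qed.

Lemma lepU_mpath a b c z : z \in [:: a; b; c] -> (U_(z) <= mpath a b c)%MM.
Proof.
by rewrite lep1mP !mnmDE !mnm1E !inE => /or3P [] /eqP ->; rewrite eqxx; lia.
Qed.

End VertexMonomials.

Section PathCombinatorics.
Variables (n : nat) (adj : rel 'I_n) (x y : 'I_n).
Hypotheses (adj_sym : ssrbool.symmetric adj) (adj_irr : irreflexive adj).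
Implicit Types (a b c z w : 'I_n).

Lemma adj_neq a b : adj a b -> a != b.
Proof. by apply: contraTneq => ->; rewrite adj_irr. Qed.

Lemma path3_rev a b c : path3 adj a b c -> path3 adj c b a.
Proof.
by case/and5P=> ab bc ac hab hbc; apply/and5P; split; rewrite 1?eq_sym 1?adj_sym.
Qed.

Lemma enbhd_neq z : z \in enbhd adj x y -> (z != x) && (z != y).
Proof.
rewrite !inE => /orP [/andP [-> /adj_neq]|/andP [-> /adj_neq]];
  by rewrite eq_sym ?andbT.
Qed.

Lemma cnbhd_neq z : z \notin cnbhd adj x -> z != x.
Proof. by rewrite !inE negb_or => /andP []. Qed.

(* N[e] \ N(e) = {x, y}, and a vertex adjacent to x or y lies in N[e]; so a
   3-path meeting N[e] but avoiding N(e) would have three distinct vertices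
   in {x, y}. *)
Lemma path3_notin_cenbhd a b c : path3 adj a b c ->
  (forall z, z \in [:: a; b; c] -> z \notin enbhd adj x y) ->
  forall z, z \in [:: a; b; c] -> z \notin cenbhd adj x y.
Proof.
case/and5P=> ab bc ac hab hbc notE z0 z0P; apply/negP => z0C.
pose xy z := (z == x) || (z == y).
have xyP z : z \in [:: a; b; c] -> z \in cenbhd adj x y -> xy z.
  move=> /notE; rewrite /xy !inE.
  by case: (eqVneq z x); case: (eqVneq z y); case: (adj x z); case: (adj y z).
have xy_adj z w : w \in [:: a; b; c] -> adj z w -> xy z -> xy w.
  move=> wP zw xyz; apply: xyP => //; rewrite !inE.
  by case/orP: xyz => /eqP <-; rewrite zw ?orbT.
have xyb : xy b.
  move: z0P (xyP _ z0P z0C); rewrite !inE => /or3P [] /eqP -> //.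
  - by apply: xy_adj; rewrite ?inE ?eqxx ?orbT.
  - by apply: xy_adj; rewrite ?inE ?eqxx ?orbT // adj_sym.
have xya : xy a by apply: (xy_adj b); rewrite ?inE ?eqxx // adj_sym.
have xyc : xy c by apply: (xy_adj b); rewrite ?inE ?eqxx ?orbT.
move: ab bc ac; rewrite /xy in xya xyb xyc.
by case/orP: xya => /eqP->; case/orP: xyb => /eqP->; case/orP: xyc => /eqP->;
  rewrite ?eqxx.
Qed.

(* Either x is on the path, and the two other vertices form an edge of H, or a
   neighbour of x is, giving an edge of N^edge(x), or the path avoids N[x]. *)
Lemma path3_Hgraph_cases a b c : path3 adj a b c -> y \notin [:: a; b; c] ->
  [\/ [&& Hgraph adj x y a b, a != x & b != x],
      [&& Hgraph adj x y b c, b != x & c != x],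
      [&& Hgraph adj x y a c, a != x & c != x] |
      [&& a \notin cnbhd adj x, b \notin cnbhd adj x & c \notin cnbhd adj x]].
Proof.
move=> p; have /and5P [ab bc ac hab hbc] := p.
have /and5P [cb ba ca hcb hba] := path3_rev p.
rewrite !inE !negb_or => /and3P [ya yb yc].
have [ay cy] : a != y /\ c != y by rewrite !(eq_sym _ y).
rewrite /Hgraph /edge_nbhd /path3 !inE.
case: (eqVneq a x) => [<-|ax].
  by apply: Or42; rewrite ?(ab, ba, bc, cb, ac, ca, hab, hba, hbc, hcb).
case: (eqVneq c x) => [<-|cx].
  by apply: Or41; rewrite ?(ab, ba, bc, cb, ac, ca, hab, hba, hbc, hcb) ?orbT.
case: (eqVneq b x) => [<-|bx].
  by apply: Or43; rewrite ?(ac, ay, cy, hab, hba, hbc, hcb) ?orbT.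
have [xa xb xc] : [/\ x != a, x != b & x != c] by split; rewrite eq_sym.
case hxa: (adj x a).
  by apply: Or41; rewrite ?(ab, ax, bx, xa, xb, hab, hxa).
case hxb: (adj x b).
  by apply: Or41; rewrite ?(ab, ba, ax, bx, xa, xb, hab, hba, hxb) ?orbT.
case hxc: (adj x c).
  by apply: Or42; rewrite ?(bc, cb, bx, cx, xb, xc, hbc, hcb, hxc) ?orbT.
by apply: Or44; rewrite ?(ax, bx, cx, xa, xb, xc, hxa, hxb, hxc).
Qed.

End PathCombinatorics.

Section ColonIdeals.
Variables (K : fieldType) (n : nat) (adj : rel 'I_n) (x y : 'I_n).
Hypotheses (adj_sym : ssrbool.symmetric adj) (adj_irr : irreflexive adj).
Hypothesis adj_xy : adj x y.
Local Notation R := {mpoly K[n]}.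
Implicit Types (W : {set 'I_n}) (g p : R).

Definition path3_monomials W : R -> Prop :=
  fun p => exists a b c, [&& a \in W, b \in W, c \in W & path3 adj a b c] /\
                         p = 'X_a * 'X_b * 'X_c.

Lemma path3_monomials_monomial W : monomial_set (path3_monomials W).
Proof. by move=> _ [a [b [c [_ ->]]]]; exists (mpath a b c); rewrite mpolyX_path. Qed.

Lemma path3_monomialsP W m : path3_monomials W 'X_[m] -> exists a b c,
  [&& a \in W, b \in W, c \in W & path3 adj a b c] /\ m = mpath a b c.
Proof.
case=> a [b [c [abc Xm]]]; exists a, b, c; split => //.
by apply: (@mpolyX_inj K); rewrite /= mpolyX_path.
Qed.

Lemma I3_subset W1 W2 p : W1 \subset W2 -> I3 adj W1 p -> I3 adj W2 p.
Proof.
move=> /subsetP W12; apply: gen_ideal_mono => _ [a [b [c [abc ->]]]].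
by case/and4P: abc => aW bW cW abc; exists a, b, c; rewrite !W12 ?abc.
Qed.

Lemma colon_I3_edge_sub g :
  colon (I3 adj setT) ('X_x * 'X_y) g ->
  ideal_add (var_ideal (enbhd adj x y)) (I3 adj (~: cenbhd adj x y)) g.
Proof.
set P := ideal_add _ _; have PI : is_ideal P by apply: gen_ideal_is_ideal.
rewrite /colon -mpolyXD => Sg.
apply: (colon_monomial_sub PI (@path3_monomials_monomial setT) _ Sg).
move=> _ u /path3_monomialsP [a [b [c [/and4P [_ _ _ abc] ->]]]].
rewrite -addmA => le_abc.
have le_u w : (w <= mpath a b c)%MM -> w x = 0%N -> w y = 0%N -> (w <= u)%MM.
  by move=> wm wx; apply: lem_cancelU (lem_cancelU (lepm_trans wm le_abc) wx).
have [/hasP [z zP zE] | /hasPn notE] :=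
  boolP (has (mem (enbhd adj x y)) [:: a; b; c]).
  have /andP [zx zy] := enbhd_neq adj_irr zE.
  apply: (ideal_lem PI (w := U_(z))).
    by apply: le_u; rewrite ?mnm1E ?(negbTE zx) ?(negbTE zy) ?lepU_mpath.
  by apply/ideal_add_l/gen_ideal_base; exists z.
have notC := path3_notin_cenbhd adj_sym abc notE.
have [xC yC] : x \in cenbhd adj x y /\ y \in cenbhd adj x y.
  by rewrite !inE !eqxx !orbT.
apply: (ideal_lem PI (w := mpath a b c)).
  by apply: le_u; rewrite ?lepm_refl // mpath_eq0 //;
    apply/negP => /notC; rewrite ?xC ?yC.
apply/ideal_add_r/gen_ideal_base; exists a, b, c; rewrite mpolyX_path.
by rewrite !in_setC !notC ?abc // !inE eqxx ?orbT.
Qed.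

Lemma colon_I3_edge_sup g :
  ideal_add (var_ideal (enbhd adj x y)) (I3 adj (~: cenbhd adj x y)) g ->
  colon (I3 adj setT) ('X_x * 'X_y) g.
Proof.
have I3I : is_ideal (@I3 K n adj setT) by apply: gen_ideal_is_ideal.
apply: ideal_add_min; first exact: colon_is_ideal.
  apply: gen_ideal_sub_colon I3I _ => _ [z [zE ->]]; apply: gen_ideal_base.
  have xy := adj_neq adj_irr adj_xy.
  move: zE; rewrite !inE => /orP [/andP [zy xz] | /andP [zx yz]].
    exists z, x, y; rewrite mulrA !in_setT /path3 zy xy adj_sym xz adj_xy.
    by rewrite eq_sym (adj_neq adj_irr xz).
  exists x, y, z; rewrite mulrC !in_setT /path3 xy (adj_neq adj_irr yz) adj_xy yz.
  by rewrite eq_sym zx.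
by move=> p /(I3_subset (subsetT _)); apply: ideal_mulr.
Qed.

Lemma colon_I3_addxy_sub g :
  colon (ideal_add (I3 adj setT) (princ ('X_x * 'X_y))) 'X_x g ->
  ideal_add (ideal_add (princ 'X_y) (I2 (Hgraph adj x y)))
            (I3 adj (~: cnbhd adj x)) g.
Proof.
pose S s := path3_monomials setT s \/ s = 'X_x * 'X_y.
rewrite /colon => /ideal_add_gen Sg.
have {}Sg : gen_ideal S (g * 'X_x) := Sg.
set P := ideal_add _ _; have PI : is_ideal P by apply: gen_ideal_is_ideal.
have monS : monomial_set S.
  move=> s [/path3_monomials_monomial // | ->].
  by exists (U_(x) + U_(y))%MM; rewrite mpolyXD.
apply: (colon_monomial_sub PI monS _ Sg) => m u Sm le_m.
have le_u w : (w <= m)%MM -> w x = 0%N -> (w <= u)%MM.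
  by move=> wm; apply: lem_cancelU (lepm_trans wm le_m).
have yx : y != x by rewrite eq_sym (adj_neq adj_irr adj_xy).
have y_div : (U_(y) <= m)%MM -> P 'X_[u].
  move=> ym; apply: (ideal_lem PI (w := U_(y))).
    by apply: le_u; rewrite // mnm1E (negbTE yx).
  by apply/ideal_add_l/ideal_add_l/gen_ideal_base.
case: Sm => [/path3_monomialsP [a [b [c [/and4P [_ _ _ abc] m_abc]]]] | Xm]; last first.
  apply: y_div; suff -> : m = (U_(x) + U_(y))%MM by apply: lem_addl.
  by apply: (@mpolyX_inj K); rewrite /= Xm mpolyXD.
subst m; have [/lepU_mpath/y_div // | yP] := boolP (y \in [:: a; b; c]).
have edge z1 z2 : Hgraph adj x y z1 z2 -> z1 != x -> z2 != x ->
    (U_(z1) + U_(z2) <= mpath a b c)%MM -> P 'X_[u].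
  move=> H12 z1x z2x le12; apply: (ideal_lem PI (w := (U_(z1) + U_(z2))%MM)).
    by apply: le_u; rewrite // mnmDE !mnm1E (negbTE z1x) (negbTE z2x).
  by apply/ideal_add_l/ideal_add_r/gen_ideal_base; exists z1, z2; rewrite mpolyXD.
case: (path3_Hgraph_cases x adj_sym abc yP) => /and3P [H12 z1x z2x].
- by apply: edge H12 z1x z2x _; apply: lem_addr.
- by apply: edge H12 z1x z2x _; rewrite /mpath -addmA; apply: lem_addl.
- apply: edge H12 z1x z2x _.
  by rewrite /mpath -addmA [(U_(b) + _)%MM]addmC addmA lem_addr.
have xP : x \notin [:: a; b; c].
  by rewrite !inE !negb_or ![x == _]eq_sym !(cnbhd_neq (adj := adj)).
apply: (ideal_lem PI (w := mpath a b c)).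
  by apply: le_u; rewrite ?lepm_refl ?mpath_eq0.
apply/ideal_add_r/gen_ideal_base; exists a, b, c; rewrite mpolyX_path.
by rewrite !in_setC H12 z1x z2x abc.
Qed.

Lemma colon_I3_addxy_sup g :
  ideal_add (ideal_add (princ 'X_y) (I2 (Hgraph adj x y)))
            (I3 adj (~: cnbhd adj x)) g ->
  colon (ideal_add (I3 adj setT) (princ ('X_x * 'X_y))) 'X_x g.
Proof.
have QI : is_ideal (ideal_add (@I3 K n adj setT) (princ ('X_x * 'X_y))).
  exact: gen_ideal_is_ideal.
have QxI := colon_is_ideal 'X_x QI.
apply: (ideal_add_min QxI); first apply: (ideal_add_min QxI).
- apply: gen_ideal_sub_colon QI _ => _ ->.
  by apply/ideal_add_r/gen_ideal_base; rewrite mulrC.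
- apply: gen_ideal_sub_colon QI _ => _ [a [b [Hab ->]]].
  apply/ideal_add_l/gen_ideal_base.
  case/orP: Hab => [/andP [_ /orP [xab | xba]] | /and3P [ab]].
  + by exists x, a, b; rewrite mulrC mulrA !in_setT.
  + by exists x, b, a; rewrite mulrC [_ * 'X_b]mulrC mulrA !in_setT.
  rewrite !inE => /andP [ay xa] /andP [_ xb]; exists a, x, b.
  rewrite mulrAC !in_setT /path3 ab xb adj_sym xa (adj_neq adj_irr xb).
  by rewrite eq_sym (adj_neq adj_irr xa).
- move=> p /(I3_subset (subsetT _)) I3p; apply: ideal_add_l.
  exact: ideal_mulr (gen_ideal_is_ideal _) I3p.
Qed.

End ColonIdeals.

Theorem lemma4p1 (K : fieldType) (n : nat) (adj : rel 'I_n) (x y : 'I_n) :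
  simple_graph adj -> adj x y ->
  ideal_eq (colon (@I3 K n adj setT) ('X_x * 'X_y))
           (ideal_add (@var_ideal K n (enbhd adj x y))
                      (@I3 K n adj (~: cenbhd adj x y)))
  /\
  ideal_eq (colon (ideal_add (@I3 K n adj setT) (princ ('X_x * 'X_y))) 'X_x)
           (ideal_add (ideal_add (princ 'X_y) (@I2 K n (Hgraph adj x y)))
                      (@I3 K n adj (~: cnbhd adj x))).
Proof.
case=> adj_sym adj_irr adj_xy; split=> g; split.
- exact: colon_I3_edge_sub.
- exact: colon_I3_edge_sup.
- exact: colon_I3_addxy_sub.
- exact: colon_I3_addxy_sup.
Qed.
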